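(* Let $K$ be an algebraically closed field and let $m,m_1,m_2,r\ge0$ be integers with $r$ even and $m=m_1+m_2$. For each $k$, let $X_k$ denote the variety of skew-symmetric $k\times k$ matrices over $K$ of rank at most $r$. Then the map $X_m\to X_{m_1}\times X_{m_2}$ sending a matrix to its pair of diagonal blocks (the upper-left $m_1\times m_1$ block and the lower-right $m_2\times m_2$ block) is surjective. *)

From HB Require Import structures.
From mathcomp Require Import all_boot all_order all_algebra.
Set Implicit Arguments. Unset Strict Implicit. Unset Printing Implicit Defensive.
Import GRing.Theory.
Local Open Scope ring_scope.

(* Outside characteristic 2 the second condition follows from
   the first; in characteristic 2 it is the standard convention for
   skew-symmetric matrices (and makes all ranks even). *)
Definition skew (K : fieldType) (n : nat) (A : 'M[K]_n) : Prop :=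
  A^T = - A /\ (forall i : 'I_n, A i i = 0).

(* The variety X_k of skew-symmetric k x k matrices of rank at most r,
   described by its set of K-points (K algebraically closed). *)
Definition skew_rank_le (K : fieldType) (k r : nat) (A : 'M[K]_k) : Prop :=
  skew A /\ (\rank A <= r)%N.

From Pilot Require Import Defs.
From HB Require Import structures.
From mathcomp Require Import all_boot all_order all_algebra.
From mathcomp Require Import ring.
Set Implicit Arguments. Unset Strict Implicit. Unset Printing Implicit Defensive.
Local Open Scope ring_scope.
Import GRing.Theory.

(* Over any field, an alternating matrix A of rank at most 2s is a sum of s
   elementary alternating matrices u^T v - v^T u.  Indeed, if a = A i j != 0,
   then A' = A - a^-1 ((row i A)^T (row j A) - (row j A)^T (row i A)) is
   alternating, vanishes on rows i and j, and equals A N for some N; as the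
   independent rows i and j of A are killed by N, rank A' <= rank A - 2.
   Decompose A1 and A2 with s = r/2 terms each and concatenate the vectors of
   the two decompositions: the resulting sum of s elementary alternating
   matrices is alternating, has rank at most r, and has diagonal blocks A1
   and A2. *)

(* [skew] alone would denote the sesquilinear-form notation of mathcomp. *)

Section AlternatingMatrices.
Variable K : fieldType.

Definition wedge n (u v : 'rV[K]_n) : 'M[K]_n := u^T *m v - v^T *m u.

Lemma wedgeE n (u v : 'rV[K]_n) (i j : 'I_n) :
  wedge u v i j = u 0 i * v 0 j - v 0 i * u 0 j.
Proof. by rewrite !mxE !big_ord1 !mxE. Qed.

Lemma wedgeZl n a (u v : 'rV[K]_n) : wedge (a *: u) v = a *: wedge u v.
Proof. by rewrite /wedge linearZ /= -scalemxAl -scalemxAr scalerBr. Qed.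

Lemma wedge00 n : wedge 0 0 = 0 :> 'M[K]_n.
Proof. by rewrite /wedge trmx0 mul0mx subrr. Qed.

Lemma wedge_row_mx m1 m2 (u1 v1 : 'rV[K]_m1) (u2 v2 : 'rV[K]_m2) :
  wedge (row_mx u1 u2) (row_mx v1 v2) =
  block_mx (wedge u1 v1) (u1^T *m v2 - v1^T *m u2)
           (u2^T *m v1 - v2^T *m u1) (wedge u2 v2).
Proof. by rewrite /wedge !tr_row_mx !mul_col_row opp_block_mx add_block_mx. Qed.

Lemma ulsubmx_sum_wedge m1 m2 s
    (u1 v1 : nat -> 'rV[K]_m1) (u2 v2 : nat -> 'rV[K]_m2) :
  ulsubmx (\sum_(k < s) wedge (row_mx (u1 k) (u2 k)) (row_mx (v1 k) (v2 k)))
  = \sum_(k < s) wedge (u1 k) (v1 k).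
Proof.
rewrite /ulsubmx !raddf_sum; apply: eq_bigr => k _.
by rewrite wedge_row_mx; apply: block_mxKul.
Qed.

Lemma drsubmx_sum_wedge m1 m2 s
    (u1 v1 : nat -> 'rV[K]_m1) (u2 v2 : nat -> 'rV[K]_m2) :
  drsubmx (\sum_(k < s) wedge (row_mx (u1 k) (u2 k)) (row_mx (v1 k) (v2 k)))
  = \sum_(k < s) wedge (u2 k) (v2 k).
Proof.
rewrite /drsubmx !raddf_sum; apply: eq_bigr => k _.
by rewrite wedge_row_mx; apply: block_mxKdr.
Qed.

Lemma skewN_entry n (A : 'M[K]_n) (i j : 'I_n) :
  Defs.skew A -> A j i = - A i j.
Proof. by case=> /matrixP/(_ i j) + _; rewrite !mxE. Qed.

Lemma skew0 n : Defs.skew (0 : 'M[K]_n).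
Proof. by split=> [|i]; rewrite ?mxE ?trmx0 ?oppr0. Qed.

Lemma skewD n (A B : 'M[K]_n) :
  Defs.skew A -> Defs.skew B -> Defs.skew (A + B).
Proof.
case=> tA dA [tB dB]; split=> [|i]; last by rewrite mxE dA dB addr0.
by rewrite linearD /= tA tB opprD.
Qed.

Lemma skewZ n a (A : 'M[K]_n) : Defs.skew A -> Defs.skew (a *: A).
Proof.
case=> tA dA; split=> [|i]; last by rewrite mxE dA mulr0.
by rewrite linearZ /= tA scalerN.
Qed.

Lemma skew_wedge n (u v : 'rV[K]_n) : Defs.skew (wedge u v).
Proof.
split=> [|i]; last by rewrite wedgeE mulrC subrr.
by rewrite /wedge linearB /= !trmx_mul !trmxK opprB.
Qed.

Lemma mxrank_wedge n (u v : 'rV[K]_n) : (\rank (wedge u v) <= 2)%N.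
Proof.
apply: leq_trans (mxrank_add _ _) _; rewrite mxrank_opp.
rewrite -[2%N]/(1 + 1)%N; apply: leq_add;
  exact: leq_trans (mxrankM_maxl _ _) (rank_leq_col _).
Qed.

Lemma mxrank_sum_le m n I (r : seq I) (P : pred I) (F : I -> 'M[K]_(m, n)) :
  (\rank (\sum_(i <- r | P i) F i)%R <= \sum_(i <- r | P i) \rank (F i))%N.
Proof.
apply: (big_ind2 (fun A k => \rank A <= k)%N) => // [|A a B b rA rB].
  by rewrite mxrank0.
exact: leq_trans (mxrank_add A B) (leq_add rA rB).
Qed.

Lemma skew_rank_le_sum_wedge n s (u v : nat -> 'rV[K]_n) :
  skew_rank_le s.*2 (\sum_(k < s) wedge (u k) (v k)).
Proof.
split.
  by apply: big_ind => [|A B|k _]; [exact: skew0 | exact: skewD | exact: skew_wedge].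
apply: leq_trans (mxrank_sum_le _ _ _) _.
apply: (@leq_trans (\sum_(k < s) 2)%N).
  by apply: leq_sum => k _; apply: mxrank_wedge.
by rewrite sum_nat_const card_ord muln2.
Qed.

Lemma col_skew n (A : 'M[K]_n) k : Defs.skew A -> col k A = - (row k A)^T.
Proof. by move=> skA; apply/matrixP => x y; rewrite !mxE; apply: skewN_entry. Qed.

Lemma mxrank_mul_sub_ker m n p l
    (A : 'M[K]_(m, n)) (N : 'M_(n, p)) (B : 'M_(l, n)) :
  (B <= A)%MS -> B *m N = 0 -> (\rank (A *m N) + \rank B <= \rank A)%N.
Proof.
move=> sBA BN0; rewrite -(mxrank_mul_ker A N) leq_add2l.
by apply: mxrankS; rewrite sub_capmx sBA; apply/sub_kermxP.
Qed.

Definition skew_peel n (A : 'M[K]_n) i j :=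
  A - (A i j)^-1 *: wedge (row i A) (row j A).

Section SkewPeel.
Variables (n : nat) (A : 'M[K]_n) (i j : 'I_n).
Hypothesis skA : Defs.skew A.

Lemma skew_peel_skew : Defs.skew (skew_peel A i j).
Proof.
by rewrite /skew_peel -scaleNr; apply: skewD skA (skewZ _ (skew_wedge _ _)).
Qed.

Lemma skew_peel_mulmx : exists N, skew_peel A i j = A *m N.
Proof.
exists (1%:M + (A i j)^-1 *:
  ((delta_mx 0 i)^T *m row j A - (delta_mx 0 j)^T *m row i A)).
rewrite mulmxDr mulmx1 -scalemxAr mulmxBr !mulmxA !trmx_delta -!colE.
by rewrite /skew_peel !col_skew // !mulNmx opprK -scalerN opprB [- _ + _]addrC.
Qed.

Hypothesis nzAij : A i j != 0.

Lemma rows_skew_peel :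
  row i (skew_peel A i j) = 0 /\ row j (skew_peel A i j) = 0.
Proof.
have Aji := skewN_entry i j skA; have [_ Akk] := skA.
by split; apply/matrixP => x y; rewrite !mxE !big_ord1 !mxE ?Aji !Akk; field.
Qed.

Lemma mxrank_rows_skew : (2 <= \rank (col_mx (row i A) (row j A)))%N.
Proof.
have Aji := skewN_entry i j skA; have [_ Akk] := skA.
(* C is a right inverse: columns j and i of the two rows form diag(a, -a). *)
pose C : 'M_(n, 1 + 1) :=
  row_mx ((A i j)^-1 *: delta_mx j 0) (- (A i j)^-1 *: delta_mx i 0).
apply: (@mulmx1_min_rank K 2 (1 + 1) n _ 1%:M C).
rewrite mul1mx /C (@mul_col_row _ 1 1 n 1 1) -!scalemxAr -!colE.
rewrite (scalar_mx_block 1 1); apply: (f_equal4 (@block_mx K 1 1 1 1));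
  by apply/matrixP => x y; rewrite !ord1 !mxE ?Aji ?Akk ?mulr0 ?oppr0 ?mulrNN ?mulVf.
Qed.

Lemma mxrank_skew_peel : (\rank (skew_peel A i j) + 2 <= \rank A)%N.
Proof.
have [N defN] := skew_peel_mulmx; have [rowi0 rowj0] := rows_skew_peel.
apply: leq_trans (leq_add (leqnn _) mxrank_rows_skew) _.
rewrite defN; apply: mxrank_mul_sub_ker; first by rewrite col_mx_sub !row_sub.
by rewrite mul_col_mx -!row_mul -defN rowi0 rowj0 col_mx0.
Qed.

End SkewPeel.

Lemma skew_sum_wedge n s (A : 'M[K]_n) :
  Defs.skew A -> (\rank A <= s.*2)%N ->
  exists u v : nat -> 'rV[K]_n, A = \sum_(k < s) wedge (u k) (v k).
Proof.
elim: s A => [|s IH] A skA rkA.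
  exists (fun=> 0), (fun=> 0); rewrite big_ord0.
  by apply/eqP; rewrite -mxrank_eq0 -leqn0.
have [-> | /matrix0Pn[i [j nzAij]]] := eqVneq A 0.
  by exists (fun=> 0), (fun=> 0); rewrite big1 // => k _; rewrite wedge00.
have rk_peel : (\rank (skew_peel A i j) <= s.*2)%N.
  rewrite -(leq_add2r 2) (leq_trans (mxrank_skew_peel skA nzAij)) //.
  by rewrite addn2 -doubleS.
have [u [v def_peel]] := IH _ (skew_peel_skew i j skA) rk_peel.
exists (fun k => if k is k'.+1 then u k' else (A i j)^-1 *: row i A).
exists (fun k => if k is k'.+1 then v k' else row j A).
by rewrite big_ord_recl /= -def_peel wedgeZl /skew_peel addrC subrK.
Qed.

End AlternatingMatrices.

Theorem lemma4p4 (K : closedFieldType) (m1 m2 r : nat) (hr : ~~ odd r)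
  (A1 : 'M[K]_m1) (A2 : 'M[K]_m2) :
  skew_rank_le r A1 -> skew_rank_le r A2 ->
  exists A : 'M[K]_(m1 + m2),
    skew_rank_le r A /\ ulsubmx A = A1 /\ drsubmx A = A2.
Proof.
rewrite -(even_halfK hr); move: r./2 => s [skA1 rkA1] [skA2 rkA2].
have [u1 [v1 ->]] := skew_sum_wedge skA1 rkA1.
have [u2 [v2 ->]] := skew_sum_wedge skA2 rkA2.
exists (\sum_(k < s) wedge (row_mx (u1 k) (u2 k)) (row_mx (v1 k) (v2 k))).
rewrite ulsubmx_sum_wedge drsubmx_sum_wedge; split=> //.
exact: (skew_rank_le_sum_wedge s
  (fun k => row_mx (u1 k) (u2 k)) (fun k => row_mx (v1 k) (v2 k))).
Qed.
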